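(* Let $r\ge 2$ and $(\boldsymbol\lambda,\mathbf{s})\in\mathcal{A}_e^r$. Then the map $\eta\circ\Psi_r$ restricts to a bijection from the $\approx_e$-equivalence class of $(\boldsymbol\lambda,\mathbf{s})$ in $\mathcal{A}_e^r$ onto the $\approx_r$-equivalence class of $\eta(\Psi_r(\boldsymbol\lambda,\mathbf{s}))$ in $\mathcal{A}_r^e$.
   Context: Fix an integer $e\ge 2$. A partition is a weakly decreasing sequence $\lambda=(\lambda_1,\lambda_2,\dots)$ of non-negative integers with finite sum $|\lambda|$; $\Lambda$ denotes the set of partitions and $\Lambda^{(m)}$ the set of $m$-multipartitions, i.e. $m$-tuples $\boldsymbol\lambda=(\lambda^{(1)},\dots,\lambda^{(m)})$ of partitions, with $|\boldsymbol\lambda|=\sum_k|\lambda^{(k)}|$. A $\beta$-set is a subset $B\subseteq\mathbb{Z}$ containing all sufficiently small integers and no sufficiently large ones. For $\lambda\in\Lambda$ and $s\in\mathbb{Z}$ set $B_s(\lambda)=\{\lambda_i-i+s : i\ge 1\}$; every $\beta$-set equals $B_s(\lambda)$ for a unique pair $(\lambda,s)$. For $N\ge 2$ let $\mathcal{A}_N=\Lambda\times\mathbb{Z}$ (abacus configurations with $N$ runners) and $\mathcal{A}_N^m=\Lambda^{(m)}\times\mathbb{Z}^m$, where $(\boldsymbol\lambda,\mathbf{s})$ is identified with the $m$-tuple of $\beta$-sets $(B_{s_1}(\lambda^{(1)}),\dots,B_{s_m}(\lambda^{(m)}))$. Blocks: for $(\boldsymbol\lambda,\mathbf{s})\in\mathcal{A}_N^m$,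 its $N$-residue multiset is the multiset of the values $s_k+y-x \bmod N$ over all nodes $(x,y,k)$ with $x\ge1$, $1\le y\le\lambda^{(k)}_x$, $1\le k\le m$. Define $(\boldsymbol\lambda,\mathbf{s})\approx_N(\boldsymbol\mu,\mathbf{s}')$ iff $\mathbf{s}=\mathbf{s}'$, $|\boldsymbol\lambda|=|\boldsymbol\mu|$ and the $N$-residue multisets coincide. Its equivalence classes are called blocks. The map $\eta$: for $(\lambda,s)\in\mathcal{A}_e$ with $B=B_s(\lambda)$ and $0\le i<e$, the set $C_i=\{(b-i)/e : b\in B,\ b\equiv i \bmod e\}$ is a $\beta$-set, so $C_i=B_{t_i}(\rho_i)$ for a unique $(\rho_i,t_i)\in\Lambda\times\mathbb{Z}$; set $\eta(\lambda,s)=((\rho_0,\dots,\rho_{e-1}),(t_0,\dots,t_{e-1}))\in\Lambda^{(e)}\times\mathbb{Z}^e$, which we also regard as an element of $\mathcal{A}_r^e$. Uglov's map: for $1\le k\le r$ define $\psi_k:\mathbb{Z}\to\mathbb{Z}$ by $\psi_k(ae+i)=((a+1)r-k)e+i$ for $a\in\mathbb{Z}$, $0\le i<e$. For $(\boldsymbol\lambda,\mathbf{s})\in\mathcal{A}_e^r$ the set $B=\bigsqcup_{k=1}^r\psi_k(B_{s_k}(\lambda^{(k)}))$ is a $\beta$-set, and $\Psi_r(\boldsymbol\lambda,\mathbf{s})$ is the unique $(\tilde\lambda,\tilde s)\in\mathcal{A}_e$ with $B_{\tilde s}(\tilde\lambda)=B$. $\Psi_r:\mathcal{A}_e^r\to\mathcal{A}_e$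 is a bijection; $\Phi_r=\Psi_r^{-1}$. *)

From Stdlib Require Import ClassicalEpsilon.
From mathcomp Require Import all_boot all_order all_algebra.
Unset Printing Implicit Defensive.
Import Order.TTheory GRing.Theory Num.Theory.
Local Open Scope ring_scope.

(* A partition: a weakly decreasing finite sequence of positive naturals
   (trailing zeros omitted); lambda_i = nth 0 l (i-1). *)
Definition is_part (l : seq nat) : bool :=
  sorted geq l && all (fun x => (0 < x)%N) l.

Definition partition := {l : seq nat | is_part l}.

Definition part0 : partition := exist _ [::] (erefl true).

Definition part_size (p : partition) : nat := sumn (sval p).

(* part i = lambda_{i+1} *)
Definition part_at (p : partition) (i : nat) : nat := nth 0%N (sval p) i.

(* A_N^m (the number N of runners only matters for blocks):
   m-multipartitions together with m-multicharges. Index k : 'I_m stands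
   for the paper's k+1. *)
Definition config (m : nat) := ({ffun 'I_m -> partition} * {ffun 'I_m -> int})%type.

Definition config_size m (c : config m) : nat := (\sum_(k < m) part_size (c.1 k))%N.

Definition in_beta (s : int) (p : partition) (b : int) : Prop :=
  exists i : nat, b = (part_at p i)%:Z - (i.+1)%:Z + s.

Definition rescount (N : nat) m (c : config m) (j : int) : nat :=
  (\sum_(k < m) \sum_(x < size (sval (c.1 k)))
     \sum_(y < part_at (c.1 k) x)
        ((c.2 k + (y.+1)%:Z - (x.+1)%:Z - j) %% N%:Z == 0)%Z)%N.

Definition approx (N : nat) m (c d : config m) : Prop :=
  c.2 = d.2 /\ config_size m c = config_size m d /\
  forall j : int, rescount N m c j = rescount N m d j.

Definition eta_spec (e : nat) (c : partition * int) (d : config e) : Prop :=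
  forall (i : 'I_e) (x : int),
    in_beta (d.2 i) (d.1 i) x <-> in_beta c.2 c.1 (x * e%:Z + (i : nat)%:Z).

Definition config0 m : config m := ([ffun => part0], [ffun => 0]).

Definition eta (e : nat) (c : partition * int) : config e :=
  epsilon (inhabits (config0 e)) (eta_spec e c).

(* Uglov's psi_k, for k : 'I_r standing for k+1 *)
Definition psi (e r : nat) (k : 'I_r) (b : int) : int :=
  (((b %/ e%:Z)%Z + 1) * r%:Z - (k.+1)%:Z) * e%:Z + (b %% e%:Z)%Z.

Definition Psi_spec (e r : nat) (c : config r) (d : partition * int) : Prop :=
  forall b : int, in_beta d.2 d.1 b <->
    exists (k : 'I_r) (a : int), in_beta (c.2 k) (c.1 k) a /\ b = psi e r k a.

Definition Psi (e r : nat) (c : config r) : partition * int :=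
  epsilon (inhabits (part0, 0)) (Psi_spec e r c).

From Pilot Require Import Defs.
From Stdlib Require Import ClassicalEpsilon.
From mathcomp Require Import all_boot all_order all_algebra.
From mathcomp Require Import zify ring.
Import Order.TTheory GRing.Theory Num.Theory.
Local Open Scope ring_scope.

(* On an abacus, Uglov's map interleaves the [r] beta-sets of a configuration
   row by row: position [q e + i] of component [k] goes to runner [i] of row
   [q r + (r - 1 - k)].  Cutting the result into its [e] runners ([eta]) thus
   transposes abaci: the bead in row [q] on runner [i] of component [k] of [c]
   is the bead in row [q] on runner [r - 1 - k] of component [i] of
   [eta (Psi c)].  In particular [eta \o Psi] is a bijection.
   Fix a window of rows outside of which two configurations are trivial.  Their
   charges, sizes and residue counts are affine functions of three bead
   statistics: the number of beads in each component, the number of beads on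
   each runner and the sum of the rows of all beads; conversely the statistics
   are recovered from the charges and the residue counts, so two
   configurations lie in the same block iff their statistics agree.  The
   transposition exchanges the component and the runner counts and preserves
   the row sum, hence maps blocks onto blocks. *)

(** * Beta-sets of sequences *)

Definition beta_seq (s : int) (l : seq nat) (b : int) : Prop :=
  exists i : nat, b = (nth 0%N l i)%:Z - (i.+1)%:Z + s.

Lemma beta_seq_nil s b : beta_seq s [::] b <-> b < s.
Proof.
split; first by move=> [i ->]; rewrite nth_nil; lia.
by move=> h; exists (absz (s - 1 - b)%R); rewrite nth_nil; lia.
Qed.

Lemma beta_seq_cons s a l b :
  beta_seq s (a :: l) b <-> b = a%:Z - 1 + s \/ beta_seq (s - 1) l b.
Proof.
split; first by move=> [[|i] ->] /=; [left; lia | right; exists i; lia].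
by move=> [->|[i ->]]; [exists 0%N => /=; lia | exists i.+1 => /=; lia].
Qed.

Lemma is_part_cons {a l} :
  is_part (a :: l) -> [/\ is_part l, (0 < a)%N & (head 0%N l <= a)%N].
Proof.
rewrite /is_part /= => /andP [hs /andP [ha hl]].
rewrite ha hl (path_sorted hs); split => //.
by case: l hs {hl} => //= x l /andP [].
Qed.

Lemma is_part_consI a l :
  is_part l -> (0 < a)%N -> (head 0%N l <= a)%N -> is_part (a :: l).
Proof.
rewrite /is_part => /andP [hs hl] a0 ha /=.
by rewrite a0 hl andbT; case: l hs hl ha => //= x l -> _ ->.
Qed.

Lemma is_part_behead {l} : is_part l -> is_part (behead l).
Proof. by case: l => // a l /is_part_cons []. Qed.

Lemma beta_seq_le_top {s l b} :
  is_part l -> beta_seq s l b -> b <= (head 0%N l)%:Z - 1 + s.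
Proof.
elim: l s => [|a l IH] s; first by move=> _ /beta_seq_nil /=; lia.
move=> /is_part_cons [hl ha hh] /beta_seq_cons [->|/(IH _ hl)] /=; lia.
Qed.

Lemma beta_seq_below s l b : b < s - (size l)%:Z -> beta_seq s l b.
Proof.
elim: l s => [|a l IH] s /= hb; first by apply/beta_seq_nil; lia.
by apply/beta_seq_cons; right; apply: IH; lia.
Qed.

Lemma beta_seq_gap s {l} : is_part l -> ~ beta_seq s l (s - (size l)%:Z).
Proof.
elim: l s => [|a l IH] s /=; first by move=> _ /beta_seq_nil; lia.
move=> /is_part_cons [hl ha _] /beta_seq_cons [|]; first lia.
by apply: contra_not (IH _ hl); congr beta_seq; lia.
Qed.

Lemma beta_seq_top s l b : is_part l ->
  beta_seq s l b <->
  b = (head 0%N l)%:Z - 1 + s \/ beta_seq (s - 1) (behead l) b.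
Proof.
case: l => [|a l] _ /=; last exact: beta_seq_cons.
by rewrite !beta_seq_nil; lia.
Qed.

Lemma beta_seq_head {s l} : is_part l -> beta_seq s l ((head 0%N l)%:Z - 1 + s).
Proof. by move=> hl; apply/(beta_seq_top _ _ _ hl); left. Qed.

Lemma beta_seq_of_behead {s l b} : is_part l ->
  beta_seq (s - 1) (behead l) b -> beta_seq s l b.
Proof. by move=> hl hb; apply/(beta_seq_top _ _ _ hl); right. Qed.

Lemma beta_seq_behead_lt {s l b} : is_part l ->
  beta_seq (s - 1) (behead l) b -> b < (head 0%N l)%:Z - 1 + s.
Proof.
case: l => [|a l] /=; first by move=> _ /beta_seq_nil; lia.
by move=> /is_part_cons [hl _ hh] /(beta_seq_le_top hl); lia.
Qed.

Lemma beta_seq_behead_eq {s s' l l'} : is_part l -> is_part l' ->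
  (forall b, beta_seq s l b <-> beta_seq s' l' b) ->
  (head 0%N l)%:Z + s = (head 0%N l')%:Z + s' /\
  forall b, beta_seq (s - 1) (behead l) b <-> beta_seq (s' - 1) (behead l') b.
Proof.
move=> hl hl' h.
have ht := proj1 (h _) (beta_seq_head hl); have ht' := proj2 (h _) (beta_seq_head hl').
have et : (head 0%N l)%:Z + s = (head 0%N l')%:Z + s'.
  by move: (beta_seq_le_top hl' ht) (beta_seq_le_top hl ht'); lia.
split => // b; split => hb.
  have := beta_seq_behead_lt hl hb.
  by have /(beta_seq_top _ _ _ hl') [] // := proj1 (h b) (beta_seq_of_behead hl hb); lia.
have := beta_seq_behead_lt hl' hb.
by have /(beta_seq_top _ _ _ hl) [] // := proj2 (h b) (beta_seq_of_behead hl' hb); lia.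
Qed.

(* Peel off the largest element of both beta-sets. *)
Lemma beta_seq_inj {s s' l l'} : is_part l -> is_part l' ->
  (forall b, beta_seq s l b <-> beta_seq s' l' b) -> s = s' /\ l = l'.
Proof.
have [n hn] : exists n, (size l + size l' <= n)%N by exists (size l + size l')%N.
elim: n s s' l l' hn => [|n IH] s s' l l' hn hl hl' h.
  case: l l' hn {hl hl'} h => [|//] [|//] _ h; split => //.
  by move: (proj1 (h (s - 1))) (proj2 (h (s' - 1))); rewrite !beta_seq_nil; lia.
have [et hr] := beta_seq_behead_eq hl hl' h.
have hn' : (size (behead l) + size (behead l') <= n)%N.
  by case: l l' hn {hl hl' h hr et} => [|a l] [|a' l'] /=; lia.
have [es el] := IH _ _ _ _ hn' (is_part_behead hl) (is_part_behead hl') hr.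
have es' : s = s' by lia.
split => //; move: hl hl' el et; rewrite es'; clear hn hn' h hr IH.
case: l => [|a l]; case: l' => [|a' l'] //= + + ->.
- by move=> _ /is_part_cons [_ a0 _]; lia.
- by move=> /is_part_cons [_ a0 _]; lia.
- by move=> _ _ ea; congr (_ :: _); lia.
Qed.

(** * Windows *)

Definition window (P : int -> Prop) (M : int) (N : nat) : Prop :=
  (forall b, b < M -> P b) /\ (forall b, M + N%:Z <= b -> ~ P b).

Lemma window_mono P M N M' N' :
  window P M N -> M' <= M -> M + N%:Z <= M' + N'%:Z -> window P M' N'.
Proof. by move=> [h1 h2] ? ?; split => b hb; [apply: h1 | apply: h2]; lia. Qed.

Lemma beta_seq_add_top {s l} t : is_part l ->
  (forall b, beta_seq s l b -> b < t) ->
  exists s' l', is_part l' /\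
    forall b, beta_seq s' l' b <-> b = t \/ beta_seq s l b.
Proof.
move=> hl hlt.
have htop := hlt _ (beta_seq_head hl).
case: (ltrP 0 (t - s)) => hpos.
  exists (s + 1), (absz (t - s)%R :: l); split; first by apply: is_part_consI => //; lia.
  move=> b; rewrite beta_seq_cons addrK.
  by have -> : (absz (t - s))%:Z - 1 + (s + 1) = t by lia.
have l0 : l = [::].
  by case: l hl htop {hlt} => // x l /is_part_cons [_ x0 _] /=; lia.
subst l; exists (s + 1), [::]; split => // b; rewrite !beta_seq_nil.
by move: htop => /=; lia.
Qed.

Lemma window_beta_seq {P M N} : window P M N ->
  exists s l, is_part l /\ forall b, P b <-> beta_seq s l b.
Proof.
elim: N P => [|N IH] P [hlo hhi].
  exists M, [::]; split => // b; rewrite beta_seq_nil; split; last exact: hlo.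
  by move=> hb; case: (ltrP b M) => // h; case: (hhi b) => //; lia.
have [|s [l [hl hP]]] := IH (fun b => P b /\ b < M + N%:Z).
  by split => b hb; [split; [exact: hlo | lia] | move=> [_]; lia].
have hPE b : P b <-> b = M + N%:Z /\ P (M + N%:Z) \/ P b /\ b < M + N%:Z.
  split; last by case=> [[-> //]|[]].
  move=> hb; case: (ltrP b (M + N%:Z)) => h; first by right.
  case: (ltrP (M + N%:Z) b) => h2; first by case: (hhi b) => //; lia.
  have eb : b = M + N%:Z by lia.
  by left; rewrite -eb.
case: (classic (P (M + N%:Z))) => hv; last first.
  exists s, l; split => // b; rewrite hPE -hP; split; last by right.
  by case=> // -[_].
have hlt b : beta_seq s l b -> b < M + N%:Z by move=> /hP [].
have [s' [l' [hl' hP']]] := beta_seq_add_top (M + N%:Z) hl hlt.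
by exists s', l'; split => // b; rewrite hP' hPE -hP; intuition.
Qed.

Lemma window_in_beta {P M N} : window P M N ->
  exists (p : Defs.partition) (s : int), forall b, P b <-> in_beta s p b.
Proof.
by move=> /window_beta_seq [s [l [hl hP]]]; exists (exist _ l hl), s.
Qed.

Definition beta_bound (s : int) (p : Defs.partition) : nat :=
  (absz s + size (sval p) + head 0%N (sval p))%N.

Lemma window_beta_bound s p :
  window (in_beta s p) (- (beta_bound s p)%:Z) (beta_bound s p + beta_bound s p).
Proof.
case: p => l hl; rewrite /beta_bound /=.
by split => b hb; [apply: beta_seq_below => /= | move/(beta_seq_le_top hl)]; lia.
Qed.

(** * Uglov's map and eta *)

Lemma modz_range (b : int) {d : nat} : (0 < d)%N -> 0 <= modz b d%:Z < d%:Z.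
Proof. by move=> hd; rewrite modz_ge0 ?ltz_pmod //; lia. Qed.

Lemma divzMD_small q m (d : nat) : 0 <= m < d%:Z -> divz (q * d%:Z + m) d%:Z = q.
Proof. by move=> /andP [h0 h1]; rewrite divzMDl ?divz_small ?addr0 ?h0 //; lia. Qed.

Lemma modzMD_small q m (d : nat) : 0 <= m < d%:Z -> modz (q * d%:Z + m) d%:Z = m.
Proof. by move=> h; rewrite modzMDl modz_small. Qed.

Lemma exists_ord_of_int {n : nat} (z : int) : 0 <= z < n%:Z ->
  exists k : 'I_n, k%:Z = z.
Proof.
move=> /andP [h0 h1]; have hk : (absz z < n)%N by lia.
by exists (Ordinal hk) => /=; lia.
Qed.

Lemma psi_eqE {e r} {k : 'I_r} {a b} : (0 < e)%N ->
  b = psi e r k a <->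
  k%:Z = r%:Z - 1 - modz (divz b e%:Z) r%:Z /\
  a = divz (divz b e%:Z) r%:Z * e%:Z + modz b e%:Z.
Proof.
move=> he; have hk := ltn_ord k; have hr : (0 < r)%N by lia.
have hj : 0 <= r%:Z - 1 - k%:Z < r%:Z by lia.
split.
  move=> ->; rewrite /psi.
  have -> : (divz a e%:Z + 1) * r%:Z - (k.+1)%:Z = divz a e%:Z * r%:Z + (r%:Z - 1 - k%:Z).
    by lia.
  rewrite !divzMD_small ?modzMD_small ?modz_range //.
  by split; [lia | exact: divz_eq].
move=> [ek ->]; rewrite /psi divzMD_small ?modzMD_small ?modz_range //.
rewrite [in LHS](divz_eq b e%:Z); congr (_ * _ + _).
by rewrite [in LHS](divz_eq (divz b e%:Z) r%:Z); lia.
Qed.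

Definition Psi_beta e r (c : config r) (b : int) : Prop :=
  exists (k : 'I_r) (a : int), in_beta (c.2 k) (c.1 k) a /\ b = psi e r k a.

Lemma Psi_betaE {e r} {c : config r} {b} : (0 < e)%N ->
  Psi_beta e r c b <->
  exists k : 'I_r, k%:Z = r%:Z - 1 - modz (divz b e%:Z) r%:Z /\
    in_beta (c.2 k) (c.1 k) (divz (divz b e%:Z) r%:Z * e%:Z + modz b e%:Z).
Proof.
move=> he; split.
  by move=> [k [a [ha /(psi_eqE he) [ek ea]]]]; exists k; rewrite -ea.
move=> [k [ek hk]]; exists k; eexists; split; first exact: hk.
exact/psi_eqE.
Qed.

Definition config_bound {m} (c : config m) : nat :=
  (\sum_(k < m) beta_bound (c.2 k) (c.1 k))%N.

Lemma window_config {m} (c : config m) k D : (config_bound c <= D)%N ->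
  window (in_beta (c.2 k) (c.1 k)) (- D%:Z) (D + D).
Proof.
move=> hD; have : (beta_bound (c.2 k) (c.1 k) <= config_bound c)%N.
  by rewrite /config_bound (bigD1 k) //= leq_addr.
by move=> hk; apply: window_mono (window_beta_bound _ _) _ _; lia.
Qed.

Lemma window_Psi_beta {e r} (c : config r) : (0 < e)%N -> (0 < r)%N ->
  let D := (config_bound c * r * e)%N in window (Psi_beta e r c) (- D%:Z) (D + D).
Proof.
move=> he hr D; set B := config_bound c.
have hw k := window_config c k B (leqnn B).
split => b hb; rewrite (Psi_betaE he).
  have hQ := modz_range (divz b e%:Z) hr.
  have [k ek] : exists k : 'I_r, k%:Z = r%:Z - 1 - modz (divz b e%:Z) r%:Z.
    by apply: exists_ord_of_int; lia.
  exists k; split => //; apply: (proj1 (hw k)).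
  have h1 : divz b e%:Z < - (B * r)%N%:Z by rewrite ltz_divLR; lia.
  have h2 : divz (divz b e%:Z) r%:Z < - B%:Z by rewrite ltz_divLR; lia.
  have hi := modz_range b he.
  nia.
move=> [k [_ hk]]; apply: (proj2 (hw k)) hk.
have h1 : (B * r)%N%:Z <= divz b e%:Z by rewrite lez_divRL; lia.
have h2 : B%:Z <= divz (divz b e%:Z) r%:Z by rewrite lez_divRL; lia.
have hi := modz_range b he.
nia.
Qed.

Lemma PsiP {e r} (c : config r) : (0 < e)%N -> (0 < r)%N ->
  Psi_spec e r c (Psi e r c).
Proof.
move=> he hr; apply: epsilon_spec.
have [p [s hs]] := window_in_beta (window_Psi_beta c he hr).
by exists (p, s) => b /=; rewrite -hs.
Qed.

Lemma etaP {e} (c : Defs.partition * int) : (0 < e)%N ->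
  eta_spec e c (eta e c).
Proof.
move=> he; apply: epsilon_spec.
have runner i : exists ps : Defs.partition * int,
    forall x, in_beta ps.2 ps.1 x <-> in_beta c.2 c.1 (x * e%:Z + (i : 'I_e)%:Z).
  set D := beta_bound c.2 c.1; have [h1 h2] := window_beta_bound c.2 c.1.
  have hw : window (fun x => in_beta c.2 c.1 (x * e%:Z + i%:Z)) (- D%:Z) (D + D).
    by have := ltn_ord i; split => x hx; [apply: h1 | apply: h2]; nia.
  have [p [s hs]] := window_in_beta hw.
  by exists (p, s) => x /=; rewrite -hs.
have [f hf] := choice _ runner.
by exists ([ffun i => (f i).1], [ffun i => (f i).2]) => i x /=; rewrite !ffunE.
Qed.

Definition etaPsi e r (c : config r) : config e := eta e (Psi e r c).

(* [etaPsi] transposes the abacus: row [q], runner [j] of component [i] of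
   [etaPsi c] is row [q], runner [i] of component [r - 1 - j] of [c]. *)
Lemma in_beta_etaPsi e r (c : config r) (i : 'I_e) x : (0 < e)%N -> (0 < r)%N ->
  in_beta ((etaPsi e r c).2 i) ((etaPsi e r c).1 i) x <->
  exists k : 'I_r, k%:Z = r%:Z - 1 - modz x r%:Z /\
     in_beta (c.2 k) (c.1 k) (divz x r%:Z * e%:Z + i%:Z).
Proof.
move=> he hr; rewrite (etaP _ he) (PsiP c he hr).
have := @Psi_betaE e r c (x * e%:Z + i%:Z) he; rewrite /Psi_beta => ->.
have hi : 0 <= i%:Z < e%:Z by have := ltn_ord i; lia.
by rewrite divzMD_small // modzMD_small.
Qed.

(** * Counting beads in a window *)

Definition indicator (P : Prop) : int := if excluded_middle_informative P then 1 else 0.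

Lemma indicator_true {P : Prop} : P -> indicator P = 1.
Proof. by rewrite /indicator; case: excluded_middle_informative. Qed.

Lemma indicator_false {P : Prop} : ~ P -> indicator P = 0.
Proof. by rewrite /indicator; case: excluded_middle_informative. Qed.

Lemma indicator_iff {P Q : Prop} : (P <-> Q) -> indicator P = indicator Q.
Proof.
move=> h; case: (classic P) => hP; first by rewrite !indicator_true //; apply/h.
by rewrite !indicator_false // => /h.
Qed.

Lemma indicator_or {P Q : Prop} :
  (P -> ~ Q) -> indicator (P \/ Q) = indicator P + indicator Q.
Proof.
move=> h; case: (classic P) => hP.
  rewrite (indicator_true (or_introl hP)) (indicator_true hP).
  by rewrite (indicator_false (h hP)) addr0.
case: (classic Q) => hQ.
  rewrite (indicator_true (or_intror hQ)) (indicator_true hQ).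
  by rewrite (indicator_false hP) add0r.
by rewrite !indicator_false // => -[].
Qed.

Lemma sum_indicator_point (N : nat) M v (g : int -> int) : M <= v < M + N%:Z ->
  \sum_(t < N) indicator (M + t%:Z = v) * g (M + t%:Z) = g v.
Proof.
move=> /andP [h1 h2]; have ht : (absz (v - M)%R < N)%N by lia.
rewrite (bigD1 (Ordinal ht)) //= big1 ?addr0.
  by rewrite indicator_true ?mul1r; [congr g|]; lia.
move=> t /eqP ne; rewrite indicator_false ?mul0r // => e.
by apply: ne; apply: val_inj => /=; lia.
Qed.

Section BetaSeqWindow.

Context {M : int} {N : nat}.

Lemma window_charge {s l} : is_part l -> window (beta_seq s l) M N ->
  M + (size l)%:Z <= s <= M + N%:Z.
Proof.
move=> hl [hlo hhi]; apply/andP; split.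
  case: (ltrP (s - (size l)%:Z) M) => h; last by lia.
  by case: (beta_seq_gap s hl); apply: hlo.
case: (lerP s (M + N%:Z)) => // h; case: (hhi ((head 0%N l)%:Z - 1 + s)).
  by case: l hl {hlo hhi} => [|a l] /= => [_|/is_part_cons []]; lia.
exact: beta_seq_head.
Qed.

Lemma window_behead {s a l} : is_part (a :: l) ->
  window (beta_seq s (a :: l)) M N -> window (beta_seq (s - 1) l) M N.
Proof.
move=> hl hw; have /andP [hs _] := window_charge hl hw.
have [hlo hhi] := hw; have [_ a0 _] := is_part_cons hl.
split => b hb; last by move=> h; apply: (hhi b hb); apply/beta_seq_cons; right.
by have /beta_seq_cons [eb|//] := hlo b hb; move: hs; rewrite /=; lia.
Qed.

Lemma window_sum_nil s (g : int -> int) : window (beta_seq s [::]) M N ->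
  \sum_(t < N) indicator (beta_seq s [::] (M + t%:Z)) * g (M + t%:Z) =
  \sum_(x < absz (s - M)%R) g (s - 1 - x%:Z).
Proof.
move=> hw; have /andP [/= h1 h2] := window_charge (l := [::]) isT hw.
have hK : (absz (s - M)%R <= N)%N by lia.
rewrite [RHS](reindex_inj rev_ord_inj) /=.
rewrite [RHS](eq_bigr (fun x : 'I_(absz (s - M)%R) => g (M + x%:Z))); last first.
  by move=> x _; congr g; have := ltn_ord x; lia.
rewrite (big_ord_widen N (fun x => g (M + x%:Z)) hK) [RHS]big_mkcond /=.
apply: eq_bigr => t _; case: ifP => ht.
  by rewrite indicator_true ?mul1r //; apply/beta_seq_nil; lia.
by rewrite indicator_false ?mul0r // => /beta_seq_nil; lia.
Qed.

(* The beads in the window are the first [s - M] elements of the beta-set,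
   in decreasing order. *)
Lemma window_sum_beta_seq s l (g : int -> int) : is_part l ->
  window (beta_seq s l) M N ->
  \sum_(t < N) indicator (beta_seq s l (M + t%:Z)) * g (M + t%:Z) =
  \sum_(x < absz (s - M)%R) g ((nth 0%N l x)%:Z - (x.+1)%:Z + s).
Proof.
elim: l s => [|a l IH] s hl hw.
  rewrite window_sum_nil //; apply: eq_bigr => x _; rewrite nth_nil; congr g; lia.
have hw' := window_behead hl hw; have [hl' _ hh] := is_part_cons hl.
have /andP [hs _] := window_charge hl hw.
have htop : a%:Z - 1 + s < M + N%:Z.
  case: (ltrP (a%:Z - 1 + s) (M + N%:Z)) => // h; case: (proj2 hw _ h).
  by apply/beta_seq_cons; left.
have -> : absz (s - M)%R = (absz (s - 1 - M)%R).+1 by move: hs => /=; lia.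
rewrite big_ord_recl /=.
have -> : \sum_(t < N) indicator (beta_seq s (a :: l) (M + t%:Z)) * g (M + t%:Z) =
          \sum_(t < N) indicator (M + t%:Z = a%:Z - 1 + s) * g (M + t%:Z) +
          \sum_(t < N) indicator (beta_seq (s - 1) l (M + t%:Z)) * g (M + t%:Z).
  rewrite -big_split /=; apply: eq_bigr => t _; rewrite -mulrDl; congr (_ * _).
  rewrite -indicator_or; first by apply: indicator_iff; rewrite beta_seq_cons.
  by move=> -> /(beta_seq_le_top hl'); lia.
rewrite sum_indicator_point; last by move: hs => /=; lia.
rewrite IH //; congr (_ + _).
by apply: eq_bigr => x _; congr g; rewrite /bump leq0n add0n add1n; lia.
Qed.

End BetaSeqWindow.

Lemma Posz_sum (n : nat) (F : 'I_n -> nat) :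
  (\sum_(i < n) F i)%N%:Z = \sum_(i < n) (F i)%:Z.
Proof. exact: (big_morph Posz PoszD). Qed.

Lemma divzS_count z (d : nat) : (0 < d)%N ->
  divz (z + 1) d%:Z = divz z d%:Z + (modz (z + 1) d%:Z == 0)%:Z.
Proof.
move=> hd; set q := divz z d%:Z; set m := modz z d%:Z.
have hm : 0 <= m < d%:Z by exact: modz_range.
rewrite [z](divz_eq z d%:Z) -/q -/m; case: (ltrP (m + 1) d%:Z) => h.
  have -> : q * d%:Z + m + 1 = q * d%:Z + (m + 1) by ring.
  by rewrite divzMD_small ?modzMD_small; lia.
have -> : q * d%:Z + m + 1 = (q + 1) * d%:Z + 0 by rewrite mulrDl mul1r; lia.
by rewrite divzMD_small ?modzMD_small ?eqxx //; lia.
Qed.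

Lemma count_multiples (a : int) (d n : nat) : (0 < d)%N ->
  (\sum_(y < n) (modz (a + (y.+1)%:Z) d%:Z == 0 : nat))%N%:Z =
  divz (a + n%:Z) d%:Z - divz a d%:Z.
Proof.
move=> hd; elim: n => [|n IH]; first by rewrite big_ord0 addr0 subrr.
rewrite big_ord_recr /= PoszD IH.
have -> : a + (n.+1)%:Z = (a + n%:Z) + 1 by lia.
by rewrite divzS_count // addrAC.
Qed.

Lemma sum_nth_ord {l : seq nat} {K : nat} : (size l <= K)%N ->
  \sum_(x < K) (nth 0%N l x)%:Z = (sumn l)%:Z.
Proof.
elim: l K => [|a l IH] K hK; first by rewrite big1 // => x _; rewrite nth_nil.
by case: K hK => // K hK; rewrite big_ord_recl /= IH.
Qed.

Section PartitionWindow.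

Context {s : int} {p : Defs.partition} {M : int} {N : nat}.
Hypothesis hw : window (in_beta s p) M N.

Let K := absz (s - M)%R.

Let hK : (size (sval p) <= K)%N.
Proof. by have := window_charge (proj2_sig p) hw; rewrite /K; lia. Qed.

Let window_sum (g : int -> int) :
  \sum_(t < N) indicator (in_beta s p (M + t%:Z)) * g (M + t%:Z) =
  \sum_(x < K) g ((part_at p x)%:Z - (x.+1)%:Z + s).
Proof. exact: window_sum_beta_seq (proj2_sig p) hw. Qed.

Lemma charge_window : s = M + \sum_(t < N) indicator (in_beta s p (M + t%:Z)).
Proof.
have := window_sum (fun _ => 1); rewrite sumr_const card_ord natz.
under eq_bigr do rewrite mulr1.
by move=> ->; rewrite /K; have := window_charge (proj2_sig p) hw; lia.
Qed.

Lemma part_size_window :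
  (part_size p)%:Z = \sum_(t < N) indicator (in_beta s p (M + t%:Z)) * (M + t%:Z)
                     - \sum_(x < K) (s - 1 - x%:Z).
Proof.
have /= -> := window_sum (fun b => b); rewrite -(sum_nth_ord hK) -sumrB.
by apply: eq_bigr => x _; rewrite /part_at; ring.
Qed.

Lemma rescount_window (n : nat) (j : int) : (0 < n)%N ->
  (\sum_(x < size (sval p)) \sum_(y < part_at p x)
      ((s + (y.+1)%:Z - (x.+1)%:Z - j) %% n%:Z == 0)%Z)%N%:Z =
  \sum_(t < N) indicator (in_beta s p (M + t%:Z)) * divz (M + t%:Z - j) n%:Z
  - \sum_(x < K) divz (s - 1 - x%:Z - j) n%:Z.
Proof.
move=> hn; have /= -> := window_sum (fun b => divz (b - j) n%:Z).
rewrite -sumrB Posz_sum.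
rewrite (big_ord_widen K (fun x => (\sum_(y < part_at p x)
   ((s + (y.+1)%:Z - (x.+1)%:Z - j) %% n%:Z == 0)%Z)%N%:Z) hK).
rewrite big_mkcond /=; apply: eq_bigr => x _; case: ifP => hx; last first.
  rewrite /part_at nth_default; last by rewrite leqNgt hx.
  have -> : (0%N)%:Z - (x.+1)%:Z + s - j = s - 1 - x%:Z - j by lia.
  by rewrite subrr.
rewrite (eq_bigr (fun y : 'I_(part_at p x) =>
   (modz ((s - (x.+1)%:Z - j) + (y.+1)%:Z) n%:Z == 0 : nat))); last first.
  by move=> y _; congr (nat_of_bool (modz _ _ == 0)); lia.
by rewrite count_multiples //; congr (divz _ _ - divz _ _); ring.
Qed.

End PartitionWindow.

(** * Blocks and bead statistics *)

Lemma sum_ord_mul (a n : nat) (h : nat -> int) :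
  \sum_(t < a * n) h t = \sum_(q < a) \sum_(i < n) h (q * n + i)%N.
Proof.
elim: a => [|a IH]; first by rewrite mul0n !big_ord0.
by rewrite mulSnr big_split_ord /= IH big_ord_recr.
Qed.

Lemma divz_diff_small (i j n : nat) : (i < n)%N -> (j <= n)%N ->
  divz (i%:Z - j%:Z) n%:Z = - ((i < j)%N : nat)%:Z.
Proof.
move=> hi hj; case: (ltnP i j) => h /=.
  have -> : i%:Z - j%:Z = (-1) * n%:Z + (i%:Z - j%:Z + n%:Z) by ring.
  by rewrite divzMD_small //; lia.
have -> : i%:Z - j%:Z = 0 * n%:Z + (i%:Z - j%:Z) by ring.
by rewrite divzMD_small //; lia.
Qed.

Lemma sum3_affine {m n Nq} (t : 'I_m -> 'I_n -> nat -> int) (A : nat -> int)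
    (B : 'I_n -> int) (a : int) :
  \sum_(k < m) \sum_(i < n) \sum_(q < Nq) t k i q * (A q * a + B i) =
  a * (\sum_(k < m) \sum_(i < n) \sum_(q < Nq) t k i q * A q) +
  \sum_(i < n) B i * (\sum_(k < m) \sum_(q < Nq) t k i q).
Proof.
have -> : \sum_(i < n) B i * (\sum_(k < m) \sum_(q < Nq) t k i q) =
          \sum_(k < m) \sum_(i < n) \sum_(q < Nq) t k i q * B i.
  rewrite [RHS]exchange_big; apply: eq_bigr => i _; rewrite mulr_sumr.
  by apply: eq_bigr => k _; rewrite mulr_sumr; apply: eq_bigr => q _; ring.
rewrite mulr_sumr -big_split; apply: eq_bigr => k _.
rewrite mulr_sumr -big_split; apply: eq_bigr => i _.
by rewrite mulr_sumr -big_split; apply: eq_bigr => q _ /=; ring.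
Qed.

Section BeadStatistics.

Context {m : nat}.
Variables (n : nat) (Mq : int) (Nq : nat).

(* [bead c k i q] is [1] iff, on the abacus with [n] runners, component [k]
   of [c] has a bead on runner [i] of row [Mq + q]. *)
Definition bead (c : config m) (k : 'I_m) (i : 'I_n) (q : nat) : int :=
  indicator (in_beta (c.2 k) (c.1 k) ((Mq + q%:Z) * n%:Z + i%:Z)).

Definition comp_beads (c : config m) (k : 'I_m) : int :=
  \sum_(i < n) \sum_(q < Nq) bead c k i q.

Definition runner_beads (c : config m) (i : 'I_n) : int :=
  \sum_(k < m) \sum_(q < Nq) bead c k i q.

Definition bead_rows (c : config m) : int :=
  \sum_(k < m) \sum_(i < n) \sum_(q < Nq) bead c k i q * (Mq + q%:Z).

Definition config_window (c : config m) : Prop :=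
  forall k, window (in_beta (c.2 k) (c.1 k)) (Mq * n%:Z) (Nq * n)%N.

Lemma window_sum_by_runner (c : config m) k (g : int -> int) :
  \sum_(t < Nq * n) indicator (in_beta (c.2 k) (c.1 k) (Mq * n%:Z + t%:Z))
                    * g (Mq * n%:Z + t%:Z) =
  \sum_(i < n) \sum_(q < Nq) bead c k i q * g ((Mq + q%:Z) * n%:Z + i%:Z).
Proof.
rewrite (sum_ord_mul _ _ (fun t : nat =>
  indicator (in_beta (c.2 k) (c.1 k) (Mq * n%:Z + t%:Z)) * g (Mq * n%:Z + t%:Z))).
rewrite exchange_big /=; apply: eq_bigr => i _; apply: eq_bigr => q _.
have -> // : Mq * n%:Z + (q * n + i)%N%:Z = (Mq + q%:Z) * n%:Z + i%:Z.
by rewrite PoszD PoszM; ring.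
Qed.

Lemma charge_comp_beads (c : config m) k : config_window c ->
  c.2 k = Mq * n%:Z + comp_beads c k.
Proof.
move=> hw; rewrite {1}(charge_window (hw k)); congr (_ + _).
have := window_sum_by_runner c k (fun _ => 1); under eq_bigr do rewrite mulr1.
by move=> ->; apply: eq_bigr => i _; apply: eq_bigr => q _; rewrite mulr1.
Qed.

(* Contributions of the empty multipartition with the charges of [c]. *)
Definition vacuum_size (c : config m) : int :=
  \sum_(k < m) \sum_(x < absz (c.2 k - Mq * n%:Z)%R) (c.2 k - 1 - x%:Z).

Definition vacuum_rescount (c : config m) (j : int) : int :=
  \sum_(k < m) \sum_(x < absz (c.2 k - Mq * n%:Z)%R) divz (c.2 k - 1 - x%:Z - j) n%:Z.

Lemma config_size_beads (c : config m) : config_window c ->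
  (config_size m c)%:Z =
  n%:Z * bead_rows c + \sum_(i < n) i%:Z * runner_beads c i - vacuum_size c.
Proof.
move=> hw; rewrite /config_size Posz_sum /bead_rows /runner_beads.
rewrite -(sum3_affine (bead c) (fun q => Mq + q%:Z) (fun i => i%:Z)) -sumrB.
apply: eq_bigr => k _; rewrite (part_size_window (hw k)); congr (_ - _).
exact: window_sum_by_runner c k (fun b => b).
Qed.

Lemma rescount_beads (c : config m) j : (0 < n)%N -> config_window c ->
  (rescount n m c j)%:Z = bead_rows c +
    \sum_(i < n) divz (i%:Z - j) n%:Z * runner_beads c i - vacuum_rescount c j.
Proof.
move=> hn hw; rewrite /rescount Posz_sum /bead_rows /runner_beads.
rewrite -[X in X + _ - _]mul1r -(sum3_affine (bead c) (fun q => Mq + q%:Z)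
  (fun i => divz (i%:Z - j) n%:Z)) -sumrB.
apply: eq_bigr => k _; rewrite (rescount_window (hw k)) //; congr (_ - _).
rewrite (window_sum_by_runner c k (fun b => divz (b - j) n%:Z)).
apply: eq_bigr => i _; apply: eq_bigr => q _; congr (_ * _).
rewrite -addrA divzMDl; first by ring.
by rewrite eqz_nat -lt0n.
Qed.

Definition runner_prefix (c : config m) (j : nat) : int :=
  \sum_(i < n) ((i < j)%N : nat)%:Z * runner_beads c i.

Lemma runner_beads_prefix (c : config m) (i : 'I_n) :
  runner_beads c i = runner_prefix c i.+1 - runner_prefix c i.
Proof.
rewrite /runner_prefix -sumrB (bigD1 i) //= big1 ?addr0.
  by rewrite ltnSn ltnn /=; ring.
move=> i' ne; rewrite -mulrBl; have : (i' : nat) != i by [].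
by rewrite ltnS leq_eqVlt => /negPf -> /=; case: (i' < i)%N => /=; ring.
Qed.

Lemma rescount_prefix (c : config m) (j : nat) : (0 < n)%N -> (j <= n)%N ->
  config_window c ->
  (rescount n m c j)%:Z = bead_rows c - runner_prefix c j - vacuum_rescount c j.
Proof.
move=> hn hj hw; rewrite rescount_beads //; congr (_ + _ - _).
by rewrite -sumrN; apply: eq_bigr => i _; rewrite divz_diff_small // mulNr.
Qed.

Section Approx.

Variables (c c' : config m).
Hypotheses (hn : (0 < n)%N) (hw : config_window c) (hw' : config_window c').

Lemma approx_bead_stats : approx n m c c' ->
  [/\ forall k, comp_beads c k = comp_beads c' k,
      forall i, runner_beads c i = runner_beads c' i &
      bead_rows c = bead_rows c'].
Proof.
move=> [hs [_ hres]].
have hpre j : (j <= n)%N ->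
    bead_rows c - runner_prefix c j = bead_rows c' - runner_prefix c' j.
  move=> hj; have := rescount_prefix c j hn hj hw; rewrite hres rescount_prefix //.
  by rewrite /vacuum_rescount hs => /addIr.
have hQ : bead_rows c = bead_rows c'.
  have := hpre 0%N isT; rewrite /runner_prefix !big1 ?subr0 // => i _; by rewrite mul0r.
split => // [k|i].
  by apply: (@addrI _ (Mq * n%:Z)); rewrite -!charge_comp_beads // hs.
have hi := ltn_ord i.
rewrite !runner_beads_prefix; have := hpre i.+1 hi; have := hpre i (ltnW hi).
by rewrite hQ => /addrI/oppr_inj -> /addrI/oppr_inj ->.
Qed.

Lemma bead_stats_approx :
  (forall k, comp_beads c k = comp_beads c' k) ->
  (forall i, runner_beads c i = runner_beads c' i) ->
  bead_rows c = bead_rows c' -> approx n m c c'.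
Proof.
move=> hA hC hQ; have hs : c.2 = c'.2.
  by apply/ffunP => k; rewrite (charge_comp_beads _ k hw) (charge_comp_beads _ k hw') hA.
split=> //; split=> [|j]; apply/eqP; rewrite -eqz_nat; apply/eqP.
  rewrite !config_size_beads // hQ /vacuum_size hs.
  by congr (_ + _ - _); apply: eq_bigr => i _; rewrite hC.
rewrite !rescount_beads // hQ /vacuum_rescount hs.
by congr (_ + _ - _); apply: eq_bigr => i _; rewrite hC.
Qed.

End Approx.

End BeadStatistics.

(** * [eta \o Psi] transposes the abacus *)

Lemma config_window_bound {m} n (c : config m) D : (0 < n)%N ->
  (config_bound c <= D)%N -> config_window n (- D%:Z) (D + D) c.
Proof.
move=> hn hD k; have [h1 h2] := window_config c k D hD.
by split => b hb; [apply: h1 | apply: h2]; move: hb; rewrite ?PoszM; nia.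
Qed.

Lemma config_eq {m} (c d : config m) :
  (forall k b, in_beta (c.2 k) (c.1 k) b <-> in_beta (d.2 k) (d.1 k) b) -> c = d.
Proof.
move=> H; have h k : c.2 k = d.2 k /\ c.1 k = d.1 k.
  have [-> el] := beta_seq_inj (proj2_sig (c.1 k)) (proj2_sig (d.1 k)) (H k).
  by split => //; apply: val_inj.
case: c d h {H} => c1 c2 [d1 d2] /= h.
by congr pair; apply/ffunP => k; have [] := h k.
Qed.

Section Transpose.

Context {e r : nat}.
Hypotheses (he : (0 < e)%N) (hr : (0 < r)%N).

Lemma bead_etaPsi Mq (c : config r) (i : 'I_e) (j : 'I_r) q :
  bead r Mq (etaPsi e r c) i j q = bead e Mq c (rev_ord j) i q.
Proof.
apply: indicator_iff; rewrite in_beta_etaPsi //.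
have hj : 0 <= j%:Z < r%:Z by have := ltn_ord j; lia.
rewrite divzMD_small // modzMD_small //; split.
  by move=> [k [ek hk]]; have -> : rev_ord j = k by apply: val_inj => /=; lia.
by move=> h; exists (rev_ord j); split => //=; rewrite subnS; have := ltn_ord j; lia.
Qed.

Lemma config_window_etaPsi {Mq Nq} {c : config r} :
  config_window e Mq Nq c -> config_window r Mq Nq (etaPsi e r c).
Proof.
move=> hw i; split => b hb; rewrite in_beta_etaPsi //.
  have hm := modz_range b hr.
  have [k ek] : exists k : 'I_r, k%:Z = r%:Z - 1 - modz b r%:Z.
    by apply: exists_ord_of_int; lia.
  exists k; split => //; apply: (proj1 (hw k)).
  have h1 : divz b r%:Z < Mq by rewrite ltz_divLR //; lia.
  by have := ltn_ord i; nia.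
move=> [k [_ hk]]; apply: (proj2 (hw k) _ _ hk).
have h1 : Mq + Nq%:Z <= divz b r%:Z by rewrite lez_divRL //; move: hb; rewrite PoszM; lia.
by rewrite PoszM; nia.
Qed.

Lemma comp_beads_etaPsi Mq Nq (c : config r) i :
  comp_beads r Mq Nq (etaPsi e r c) i = runner_beads e Mq Nq c i.
Proof.
rewrite /comp_beads /runner_beads [RHS](reindex_inj rev_ord_inj).
by apply: eq_bigr => j _; apply: eq_bigr => q _; rewrite bead_etaPsi.
Qed.

Lemma runner_beads_etaPsi Mq Nq (c : config r) j :
  runner_beads r Mq Nq (etaPsi e r c) j = comp_beads e Mq Nq c (rev_ord j).
Proof.
rewrite /comp_beads /runner_beads; apply: eq_bigr => i _.
by apply: eq_bigr => q _; rewrite bead_etaPsi.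
Qed.

Lemma bead_rows_etaPsi Mq Nq (c : config r) :
  bead_rows r Mq Nq (etaPsi e r c) = bead_rows e Mq Nq c.
Proof.
rewrite /bead_rows exchange_big /= [RHS](reindex_inj rev_ord_inj).
apply: eq_bigr => j _; apply: eq_bigr => i _; apply: eq_bigr => q _.
by rewrite bead_etaPsi.
Qed.

Lemma approx_etaPsi {Mq Nq} {c c' : config r} :
  config_window e Mq Nq c -> config_window e Mq Nq c' ->
  approx e r c c' <-> approx r e (etaPsi e r c) (etaPsi e r c').
Proof.
move=> hw hw'; have hF := config_window_etaPsi hw; have hF' := config_window_etaPsi hw'.
split.
  move=> /(approx_bead_stats e Mq Nq c c' he hw hw') [hA hC hQ].
  apply: (bead_stats_approx r Mq Nq _ _ hr hF hF') => [k|i|].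
  - by rewrite !comp_beads_etaPsi.
  - by rewrite !runner_beads_etaPsi.
  - by rewrite !bead_rows_etaPsi.
move=> /(approx_bead_stats r Mq Nq _ _ hr hF hF') [hA hC hQ].
apply: (bead_stats_approx e Mq Nq c c' he hw hw') => [k|i|].
- by have := hC (rev_ord k); rewrite !runner_beads_etaPsi rev_ordK.
- by have := hA i; rewrite !comp_beads_etaPsi.
- by move: hQ; rewrite !bead_rows_etaPsi.
Qed.


Lemma in_beta_comp_etaPsi (c : config r) (k : 'I_r) (i : 'I_e) y :
  i%:Z = modz y e%:Z ->
  in_beta (c.2 k) (c.1 k) y <->
  in_beta ((etaPsi e r c).2 i) ((etaPsi e r c).1 i)
    (divz y e%:Z * r%:Z + (r%:Z - 1 - k%:Z)).
Proof.
move=> ei; rewrite in_beta_etaPsi //.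
have hk : 0 <= r%:Z - 1 - k%:Z < r%:Z by have := ltn_ord k; lia.
rewrite divzMD_small // modzMD_small // ei -divz_eq; split.
  by move=> h; exists k; split => //; lia.
by move=> [k' [ek h]]; have -> : k = k' by apply: val_inj => /=; lia.
Qed.

Lemma etaPsi_inj : injective (etaPsi e r).
Proof.
move=> c1 c2 E; apply: config_eq => k y.
have [i ei] := exists_ord_of_int _ (modz_range y he).
by rewrite (in_beta_comp_etaPsi c1 k i y ei) (in_beta_comp_etaPsi c2 k i y ei) E.
Qed.

(* The beta-set of component [k] of the preimage of [d] under [etaPsi]. *)
Definition untranspose_beta (d : config e) (k : 'I_r) (y : int) : Prop :=
  exists i : 'I_e, i%:Z = modz y e%:Z /\
    in_beta (d.2 i) (d.1 i) (divz y e%:Z * r%:Z + (r%:Z - 1 - k%:Z)).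

Lemma window_untranspose_beta (d : config e) k :
  let D := (config_bound d * e)%N in
  window (untranspose_beta d k) (- D%:Z) (D + D).
Proof.
move=> D; have hk := ltn_ord k.
split => y hy.
  have [i ei] := exists_ord_of_int _ (modz_range y he).
  exists i; split => //; apply: (proj1 (window_config d i _ (leqnn _))).
  have : divz y e%:Z < - (config_bound d)%:Z.
    by rewrite ltz_divLR //; move: hy; rewrite /D PoszM; lia.
  by nia.
move=> [i [_ h]]; apply: (proj2 (window_config d i _ (leqnn _)) _ _ h).
have : (config_bound d)%:Z <= divz y e%:Z.
  by rewrite lez_divRL //; move: hy; rewrite /D PoszM; lia.
by nia.
Qed.

Lemma etaPsi_surj (d : config e) : exists c : config r, etaPsi e r c = d.
Proof.
have comp k : exists ps : Defs.partition * int,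
    forall y, untranspose_beta d k y <-> in_beta ps.2 ps.1 y.
  have [p [s hs]] := window_in_beta (window_untranspose_beta d k).
  by exists (p, s).
have [f hf] := choice _ comp.
exists ([ffun k => (f k).1], [ffun k => (f k).2]).
apply: config_eq => i x; rewrite in_beta_etaPsi //=.
have hi : 0 <= i%:Z < e%:Z by have := ltn_ord i; lia.
have hm := modz_range x hr.
split.
  move=> [k [ek]]; rewrite !ffunE -hf => -[i' []].
  rewrite divzMD_small // modzMD_small // => ei' h.
  have -> : i = i' by apply: val_inj => /=; lia.
  have e2 : r%:Z - 1 - k%:Z = modz x r%:Z by lia.
  by rewrite e2 -divz_eq in h.
move=> h; have [k ek] : exists k : 'I_r, k%:Z = r%:Z - 1 - modz x r%:Z.
  by apply: exists_ord_of_int; lia.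
exists k; split => //; rewrite !ffunE -hf; exists i.
rewrite divzMD_small // modzMD_small //; split => //.
have -> : r%:Z - 1 - k%:Z = modz x r%:Z by lia.
by rewrite -divz_eq.
Qed.

End Transpose.

Local Close Scope ring_scope.

Theorem corollary2p14 (e r : nat) (he : (2 <= e)%N) (hr : (2 <= r)%N)
    (c : config r) :
  let F := fun c' : config r => eta e (Psi e r c') in
  (forall c', approx e r c c' -> approx r e (F c) (F c')) /\
  (forall c1 c2, approx e r c c1 -> approx e r c c2 -> F c1 = F c2 -> c1 = c2) /\
  (forall d : config e, approx r e (F c) d ->
     exists c', approx e r c c' /\ F c' = d).
Proof.
move=> F; have he0 : (0 < e)%N by lia.
have hr0 : (0 < r)%N by lia.
have approxF c' : approx e r c c' <-> approx r e (F c) (F c').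
  pose D := (config_bound c + config_bound c')%N.
  have hw := config_window_bound e c D he0 (leq_addr _ _).
  have hw' := config_window_bound e c' D he0 (leq_addl _ _).
  by have := approx_etaPsi he0 hr0 hw hw'.
split; [|split].
- by move=> c' /approxF.
- by move=> c1 c2 _ _; apply: etaPsi_inj.
- move=> d hd; have [c' E] := etaPsi_surj he0 hr0 d.
  by exists c'; split => //; apply/approxF; rewrite /F -/(etaPsi e r c') E.
Qed.
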